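(* Let $\Delta$ be a finite, flag, simply connected simplicial complex, with $\mathcal{P}_H$, $q$, $T$ and $p_n$ as in the context. There exists a constant $K$ such that $\mathrm{Area}_{\mathcal{P}_H}\big(p_n(q,\iota e)\,e^n\,p_n(\tau e,q)\big)\le K|n|^2$ for all $e\in\mathrm{Edge}(\Delta)$ and all $n\in\mathbb{Z}$.
   Context: $\mathrm{Edge}(\Delta)$ is the set of directed edges of $\Delta$; for $e$ in it, $\iota e$, $\tau e$ are its initial and terminal vertices and $\overline{e}$ is the reversed edge. $e_1\cdot\ldots\cdot e_l$ is a combinatorial path if $\tau e_i=\iota e_{i+1}$, and a combinatorial 1-cycle if also $\tau e_l=\iota e_1$. $\mathcal{P}_H=\langle\mathrm{Edge}(\Delta)\mid\mathcal{R}_H\rangle$ where $\mathcal{R}_H$ consists of the words $e\overline{e}$ ($e\in\mathrm{Edge}(\Delta)$) and $efg$, $e^{-1}f^{-1}g^{-1}$ for every combinatorial 1-cycle $e\cdot f\cdot g$. $\mathrm{Area}_{\mathcal{P}_H}(w)$ is the least $m$ such that $w$ is freely equal to $\prod_{i=1}^m x_ir_ix_i^{-1}$ with $r_i\in\mathcal{R}_H^{\pm1}$. For a letter $e$ and $k\in\mathbb{Z}$, $e^k$ is the word of $k$ copies of $e$ if $k\ge0$ and $|k|$ copies of $e^{-1}$ if $k<0$. Fix a vertex $q$ and a spanning tree $T$ of the 1-skeleton of $\Delta$; for $n\in\mathbb{Z}$ and vertices $u,v$, $p_n(u,v)=e_1^n\cdots e_l^n$ where $e_1\cdot\ldots\cdot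 e_l$ is the unique geodesic combinatorial path in $T$ from $u$ to $v$. *)

From Stdlib Require Import Relations.
From mathcomp Require Import all_boot all_algebra.
Set Implicit Arguments. Unset Strict Implicit. Unset Printing Implicit Defensive.
Import GRing.Theory Num.Theory.

Section Complex.
Variable V : finType.

Definition simplicial_complex (D : {set {set V}}) : Prop :=
  (forall s, s \in D -> s != set0) /\
  (forall s t : {set V}, s \in D -> t \subset s -> t != set0 -> t \in D) /\
  (forall v : V, [set v] \in D).

Definition flag (D : {set {set V}}) : Prop :=
  forall s : {set V}, s != set0 ->
    (forall x y, x \in s -> y \in s -> [set x; y] \in D) -> s \in D.

Definition is_edge (D : {set {set V}}) (e : V * V) : bool :=
  (e.1 != e.2) && ([set e.1; e.2] \in D).
Definition iota_e (e : V * V) : V := e.1.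
Definition tau_e (e : V * V) : V := e.2.
Definition rev_edge (e : V * V) : V * V := (e.2, e.1).

Fixpoint cpath_from (u : V) (p : seq (V * V)) (v : V) : bool :=
  if p is e :: p' then (e.1 == u) && cpath_from e.2 p' v else u == v.

Definition connected1 (D : {set {set V}}) : Prop :=
  forall u v : V, exists p, all (is_edge D) p && cpath_from u p v.

Inductive ep_step (D : {set {set V}}) : seq (V * V) -> seq (V * V) -> Prop :=
| EPback p1 p2 e : is_edge D e ->
    ep_step D (p1 ++ e :: rev_edge e :: p2) (p1 ++ p2)
| EPtri p1 p2 e f : is_edge D e -> is_edge D f -> e.2 = f.1 -> e.1 != f.2 ->
    [set e.1; e.2; f.2] \in D ->
    ep_step D (p1 ++ e :: f :: p2) (p1 ++ (e.1, f.2) :: p2).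

Definition ep_homotopic (D : {set {set V}}) := clos_refl_sym_trans _ (ep_step D).

Definition simply_connected (D : {set {set V}}) : Prop :=
  connected1 D /\
  forall u p, all (is_edge D) p -> cpath_from u p u -> ep_homotopic D p [::].

(** Spanning trees of the 1-skeleton, given by their sets of (undirected) edges. *)
Definition in_tree (T : {set {set V}}) (e : V * V) : bool :=
  (e.1 != e.2) && ([set e.1; e.2] \in T).

Definition spanning_tree (D T : {set {set V}}) : Prop :=
  (forall t, t \in T -> (t \in D) && (#|t| == 2)) /\
  (forall u v : V, exists p, all (in_tree T) p && cpath_from u p v) /\
  (forall c : seq V, 3 <= size c -> uniq c ->
      ~~ cycle (fun x y => [set x; y] \in T) c).

Definition tree_geodesic (T : {set {set V}}) (u v : V) (p : seq (V * V)) : Prop :=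
  all (in_tree T) p /\ cpath_from u p v /\
  forall p', all (in_tree T) p' -> cpath_from u p' v -> size p <= size p'.

(** Words in the free group on Edge(Delta): letter (e, true) = e,
    (e, false) = e^{-1}. *)
Definition letter := ((V * V) * bool)%type.
Definition inv_letter (a : letter) : letter := (a.1, ~~ a.2).
Definition inv_word (w : seq letter) : seq letter := rev (map inv_letter w).

Inductive free_step : seq letter -> seq letter -> Prop :=
| FreeStep u v a : free_step (u ++ a :: inv_letter a :: v) (u ++ v).

Definition free_eq := clos_refl_sym_trans _ free_step.

Definition relator (D : {set {set V}}) (r : seq letter) : Prop :=
  (exists e, is_edge D e /\ r = [:: (e, true); (rev_edge e, true)]) \/
  (exists e f g, [/\ is_edge D e, is_edge D f & is_edge D g] /\
     [/\ e.2 = f.1, f.2 = g.1 & g.2 = e.1] /\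
     (r = [:: (e, true); (f, true); (g, true)] \/
      r = [:: (e, false); (f, false); (g, false)])).

Definition relator_pm (D : {set {set V}}) (r : seq letter) : Prop :=
  relator D r \/ relator D (inv_word r).

(** [area_le D w m] <-> Area_{P_H}(w) <= m : w is freely equal to a product
    of at most m conjugates x r x^{-1} with r in R_H^{+-1}. *)
Definition area_le (D : {set {set V}}) (w : seq letter) (m : nat) : Prop :=
  exists cs : seq (seq letter * seq letter),
    size cs <= m /\
    (forall c, c \in cs -> all (fun l : letter => is_edge D l.1) c.1 /\ relator_pm D c.2) /\
    free_eq w (flatten [seq c.1 ++ c.2 ++ inv_word c.1 | c <- cs]).

Definition letter_pow (e : V * V) (k : int) : seq letter :=
  nseq `|k|%N (e, (0 <= k)%R).

(** p_n(u,v) = e_1^n ... e_l^n along the tree path p = e_1 ... e_l. *)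
Definition pn_word (p : seq (V * V)) (n : int) : seq letter :=
  flatten [seq letter_pow e n | e <- p].

End Complex.

From mathcomp Require Import all_boot all_algebra zify.
From Stdlib Require Import Relations Classical.
Set Implicit Arguments. Unset Strict Implicit. Unset Printing Implicit Defensive.

(* The word p_n(q, iota e) e^n p_n(tau e, q) is the image of the closed edge
   loop p1 e p2 under the substitution e |-> e^n.  As Delta is simply
   connected, this loop is combinatorially null-homotopic, and each elementary
   homotopy costs O(n^2) relators on the substituted word: a backtrack
   e^n ebar^n costs n relators, and for a triangle e f with third side g the
   relators make e and f commute, so e^n f^n = (e f)^n = g^n costs O(n^2).
   Tree geodesics have bounded length, so only finitely many loops occur and
   a single constant K serves them all. *)

Section FreeWords.
Variable V : finType.
Notation word := (seq (letter V)).

Lemma free_eq_catl (x a b : word) : free_eq a b -> free_eq (x ++ a) (x ++ b).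
Proof.
elim=> {a b} [a b [u v c] | a | a b _ IH | a b c _ IH1 _ IH2].
- by apply: rst_step; rewrite !catA; constructor.
- exact: rst_refl.
- exact: rst_sym.
- exact: rst_trans IH2.
Qed.

Lemma free_eq_catr (y a b : word) : free_eq a b -> free_eq (a ++ y) (b ++ y).
Proof.
elim=> {a b} [a b [u v c] | a | a b _ IH | a b c _ IH1 _ IH2].
- by apply: rst_step; rewrite -!catA; constructor.
- exact: rst_refl.
- exact: rst_sym.
- exact: rst_trans IH2.
Qed.

Lemma inv_letterK : involutive (@inv_letter V).
Proof. by case=> x []. Qed.

Lemma inv_word_cat (a b : word) : inv_word (a ++ b) = inv_word b ++ inv_word a.
Proof. by rewrite /inv_word map_cat rev_cat. Qed.

Lemma inv_wordK : involutive (@inv_word V).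
Proof.
move=> w; rewrite /inv_word map_rev revK -map_comp.
by rewrite (eq_map inv_letterK) map_id.
Qed.

Lemma free_eq_cat_inv (w : word) : free_eq (w ++ inv_word w) [::].
Proof.
elim: w => [|a w IH]; first exact: rst_refl.
rewrite -cat1s inv_word_cat -catA [w ++ _]catA.
apply: rst_trans (free_eq_catl _ (free_eq_catr _ IH)) _.
exact: rst_step (FreeStep [::] [::] a).
Qed.

Lemma free_eq_inv_cat (w : word) : free_eq (inv_word w ++ w) [::].
Proof. by have := free_eq_cat_inv (inv_word w); rewrite inv_wordK. Qed.

End FreeWords.

Section RelativeArea.
Variables (V : finType) (D : {set {set V}}).
Notation word := (seq (letter V)).

Definition edge_word (w : word) : bool := all (fun l : letter V => is_edge D l.1) w.

Definition conj_prod (cs : seq (word * word)) : word :=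
  flatten [seq c.1 ++ c.2 ++ inv_word c.1 | c <- cs].

Definition area_rel (w1 w2 : word) (m : nat) : Prop :=
  exists cs : seq (word * word), size cs <= m /\
    (forall c, c \in cs -> edge_word c.1 /\ relator_pm D c.2) /\
    free_eq w1 (conj_prod cs ++ w2).

Lemma area_le_area_rel w m : area_rel w [::] m -> area_le D w m.
Proof. by case=> cs [? [? hw]]; exists cs; rewrite cats0 in hw. Qed.

Lemma area_relW w1 w2 m m' : m <= m' -> area_rel w1 w2 m -> area_rel w1 w2 m'.
Proof. by move=> le [cs [hs hc]]; exists cs; split=> //; apply: leq_trans le. Qed.

Lemma area_rel_refl w : area_rel w w 0.
Proof. by exists [::]; split=> //; split=> //; apply: rst_refl. Qed.

Lemma area_rel_trans w1 w2 w3 m1 m2 :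
  area_rel w1 w2 m1 -> area_rel w2 w3 m2 -> area_rel w1 w3 (m1 + m2).
Proof.
case=> cs1 [s1 [v1 f1]] [cs2 [s2 [v2 f2]]].
exists (cs1 ++ cs2); split; first by rewrite size_cat leq_add.
split; first by move=> c; rewrite mem_cat => /orP [] ?; [apply: v1 | apply: v2].
by rewrite /conj_prod map_cat flatten_cat -catA; apply: rst_trans f1 (free_eq_catl _ f2).
Qed.

Lemma area_rel_free_eq w0 w1 w2 m : free_eq w0 w1 -> area_rel w1 w2 m -> area_rel w0 w2 m.
Proof. by move=> f [cs [s [v h]]]; exists cs; split=> //; split=> //; apply: rst_trans h. Qed.

Lemma area_rel_relator r : relator_pm D r -> area_rel r [::] 1.
Proof.
move=> hr; exists [:: ([::], r)]; split=> //; split.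
  by move=> c; rewrite inE => /eqP ->.
by rewrite /conj_prod /= !cats0; apply: rst_refl.
Qed.

Lemma relator_pm_inv r : relator_pm D r -> relator_pm D (inv_word r).
Proof. by case=> hr; [right; rewrite inv_wordK | left]. Qed.

Lemma conj_prod_inv cs :
  conj_prod (rev [seq (c.1, inv_word c.2) | c <- cs]) = inv_word (conj_prod cs).
Proof.
elim: cs => [|c cs IH] //=.
rewrite rev_cons -cats1 /conj_prod map_cat flatten_cat -/(conj_prod _) IH /=.
by rewrite cats0 !inv_word_cat inv_wordK -!catA.
Qed.

Lemma area_rel_sym w1 w2 m : area_rel w1 w2 m -> area_rel w2 w1 m.
Proof.
case=> cs [s [v h]].
exists (rev [seq (c.1, inv_word c.2) | c <- cs]); split.
  by rewrite size_rev size_map.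
split.
  move=> c; rewrite mem_rev => /mapP [c0 hc0 ->] /=.
  by case: (v _ hc0) => ? /relator_pm_inv.
rewrite conj_prod_inv.
apply: rst_trans (_ : free_eq _ (inv_word (conj_prod cs) ++ conj_prod cs ++ w2)) _.
  by rewrite catA; apply: rst_sym; apply: (free_eq_catr w2 (free_eq_inv_cat _)).
by apply: free_eq_catl; apply: rst_sym.
Qed.

Lemma area_rel_catr y w1 w2 m : area_rel w1 w2 m -> area_rel (w1 ++ y) (w2 ++ y) m.
Proof.
case=> cs [s [v h]]; exists cs; split=> //; split=> //.
by rewrite catA; apply: free_eq_catr.
Qed.

Lemma conj_prod_conj x cs :
  free_eq (conj_prod [seq (x ++ c.1, c.2) | c <- cs]) (x ++ conj_prod cs ++ inv_word x).
Proof.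
elim: cs => [|c cs IH] /=; first by apply: rst_sym; apply: free_eq_cat_inv.
rewrite /conj_prod /= -/(conj_prod _) -/(conj_prod _).
apply: rst_trans (free_eq_catl _ IH) _.
set A := x ++ c.1 ++ c.2 ++ inv_word c.1.
set B := conj_prod cs ++ inv_word x.
have E := free_eq_catl A (free_eq_catr B (free_eq_inv_cat x)).
rewrite inv_word_cat.
have -> : ((x ++ c.1) ++ c.2 ++ inv_word c.1 ++ inv_word x) ++ x ++ conj_prod cs ++ inv_word x
   = A ++ (inv_word x ++ x) ++ B by rewrite /A /B -!catA.
by have -> : x ++ ((c.1 ++ c.2 ++ inv_word c.1) ++ conj_prod cs) ++ inv_word x
   = A ++ [::] ++ B by rewrite /A /B -!catA.
Qed.

Lemma area_rel_catl x w1 w2 m :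
  edge_word x -> area_rel w1 w2 m -> area_rel (x ++ w1) (x ++ w2) m.
Proof.
move=> vx [cs [s [v h]]].
exists [seq (x ++ c.1, c.2) | c <- cs]; split; first by rewrite size_map.
split.
  by move=> c /mapP [c0 hc0 ->] /=; case: (v _ hc0) => ? ?; rewrite /edge_word all_cat -/(edge_word x) vx.
apply: rst_trans (free_eq_catl x h) _.
apply: rst_trans (_ : free_eq _ ((x ++ conj_prod cs ++ inv_word x) ++ x ++ w2)) _.
  have := free_eq_catl (x ++ conj_prod cs) (free_eq_catr w2 (free_eq_inv_cat x)).
  by rewrite -!catA /= => H; apply: rst_sym.
by apply: free_eq_catr; apply: rst_sym; apply: conj_prod_conj.
Qed.

Lemma area_rel_relator_last u c :
  relator_pm D (rcons u c) -> area_rel u [:: inv_letter c] 1.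
Proof.
move=> hr; apply: area_rel_free_eq (_ : free_eq _ (rcons u c ++ [:: inv_letter c])) _.
  apply: rst_sym; apply: rst_step.
  by have := FreeStep u [::] c; rewrite cats0 -cats1 -catA.
exact: area_rel_catr (area_rel_relator hr).
Qed.

Lemma area_rel_relator_head c u :
  is_edge D c.1 -> relator_pm D (c :: u) -> area_rel u [:: inv_letter c] 1.
Proof.
move=> hc hr; apply: area_rel_free_eq (_ : free_eq _ ([:: inv_letter c] ++ c :: u)) _.
  apply: rst_sym; apply: rst_step.
  by have := FreeStep [::] u (inv_letter c); rewrite inv_letterK.
have := area_rel_catl (x := [:: inv_letter c]) _ (area_rel_relator hr).
by rewrite cats0; apply; rewrite /edge_word /= hc.
Qed.

End RelativeArea.

Lemma nseq_rcons (T : Type) (x : T) k : nseq k.+1 x = rcons (nseq k x) x.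
Proof. by elim: k => //= k ->. Qed.

Section Powers.
Variables (V : finType) (D : {set {set V}}).
Notation area_rel := (area_rel D).
Notation edge_word := (edge_word D).

Lemma edge_word_nseq (a : letter V) k : is_edge D a.1 -> edge_word (nseq k a).
Proof. by move=> h; elim: k => //= k ->; rewrite h. Qed.

Lemma area_rel_nseq_cancel a b m k : is_edge D a.1 ->
  area_rel [:: a; b] [::] m -> area_rel (nseq k a ++ nseq k b) [::] (k * m).
Proof.
move=> va hab; elim: k => [|k IH]; first exact: area_rel_refl.
have -> : nseq k.+1 a ++ nseq k.+1 b = nseq k a ++ [:: a; b] ++ nseq k b.
  by rewrite nseq_rcons -cats1 -catA.
rewrite mulSn; apply: area_rel_trans IH.
exact: area_rel_catl (edge_word_nseq k va) (area_rel_catr (nseq k b) hab).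
Qed.

Lemma area_rel_flatten_nseq (u v : seq (letter V)) m k : edge_word v ->
  area_rel u v m -> area_rel (flatten (nseq k u)) (flatten (nseq k v)) (k * m).
Proof.
move=> hv huv; elim: k => [|k IH]; first exact: area_rel_refl.
rewrite mulSn; apply: area_rel_trans (area_rel_catr _ huv) _.
exact: area_rel_catl hv IH.
Qed.

Section Commuting.
Variables (a b : letter V) (m : nat).
Hypotheses (va : is_edge D a.1) (vb : is_edge D b.1).
Hypothesis hab : area_rel [:: a; b] [:: b; a] m.

Lemma area_rel_nseq_commute k : area_rel (rcons (nseq k a) b) (b :: nseq k a) (k * m).
Proof.
elim: k => [|k IH]; first exact: area_rel_refl.
rewrite mulSnr; apply: area_rel_trans (_ : area_rel _ ([:: a] ++ b :: nseq k a) _) _.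
  by apply: (area_rel_catl (x := [:: a]) _ IH); rewrite /edge_word /= va.
by have := area_rel_catr (nseq k a) hab.
Qed.

Lemma area_rel_nseq_pair k :
  area_rel (nseq k a ++ nseq k b) (flatten (nseq k [:: a; b])) (k ^ 2 * m).
Proof.
elim: k => [|k IH]; first exact: area_rel_refl.
apply: area_relW (_ : k * m + k ^ 2 * m <= _) _; first nia.
have -> : nseq k.+1 a ++ nseq k.+1 b = [:: a] ++ rcons (nseq k a) b ++ nseq k b.
  by rewrite /= -cats1 -catA.
apply: area_rel_trans (_ : area_rel _ ([:: a] ++ (b :: nseq k a) ++ nseq k b) _) _.
  apply: area_rel_catl; first by rewrite /edge_word /= va.
  exact: area_rel_catr _ (area_rel_nseq_commute k).
by apply: (area_rel_catl (x := [:: a; b])) IH; rewrite /edge_word /= va vb.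
Qed.

End Commuting.

(* Modulo the relators, a b and b a both equal c^-1 = c', so a and b commute
   and a^k b^k = (a b)^k = c'^k. *)
Lemma area_rel_triangle_pow a b c c' k :
  [/\ is_edge D a.1, is_edge D b.1, is_edge D c.1 & is_edge D c'.1] ->
  relator_pm D [:: a; b; c] -> relator_pm D [:: c; b; a] -> relator_pm D [:: c; c'] ->
  area_rel (nseq k a ++ nseq k b) (nseq k c') (4 * k ^ 2).
Proof.
case=> va vb vc vc' rabc rcba rcc'.
have ab_c : area_rel [:: a; b] [:: inv_letter c] 1 by apply: area_rel_relator_last.
have ba_c : area_rel [:: b; a] [:: inv_letter c] 1 by apply: area_rel_relator_head rcba.
have c'_c : area_rel [:: c'] [:: inv_letter c] 1 by apply: area_rel_relator_head rcc'.
have ab_ba := area_rel_trans ab_c (area_rel_sym ba_c).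
have ab_c' := area_rel_trans ab_c (area_rel_sym c'_c).
have -> : nseq k c' = flatten (nseq k [:: c']) by elim: k => //= k ->.
apply: area_relW (_ : k ^ 2 * (1 + 1) + k * (1 + 1) <= _) _; first nia.
apply: area_rel_trans (area_rel_nseq_pair va vb ab_ba k) _.
by apply: area_rel_flatten_nseq ab_c'; rewrite /edge_word /= vc'.
Qed.

End Powers.

Section EdgePathHomotopy.
Variables (V : finType) (D : {set {set V}}).
Hypothesis hD : simplicial_complex D.
Notation area_rel := (area_rel D).

Lemma is_edge_rev (e : V * V) : is_edge D e -> is_edge D (rev_edge e).
Proof. by rewrite /is_edge /= eq_sym setUC. Qed.

Lemma is_edge_triangle (x y z : V) : [set x; y; z] \in D -> x != z -> is_edge D (x, z).
Proof.
rewrite /is_edge /= => hxyz -> /=; apply: hD.2.1 hxyz _ _.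
  by apply/subsetP => w; rewrite !inE => /orP [] ->; rewrite ?orbT.
by apply/set0Pn; exists x; rewrite !inE eqxx.
Qed.

Lemma pn_word_cat (p1 p2 : seq (V * V)) n :
  pn_word (p1 ++ p2) n = pn_word p1 n ++ pn_word p2 n.
Proof. by rewrite /pn_word map_cat flatten_cat. Qed.

Lemma pn_word_cons (e : V * V) p n : pn_word (e :: p) n = letter_pow e n ++ pn_word p n.
Proof. by []. Qed.

Lemma edge_word_pn_word (p : seq (V * V)) n : all (is_edge D) p -> edge_word D (pn_word p n).
Proof.
elim: p => [|e p IH] //= /andP [he hp].
by rewrite pn_word_cons /edge_word all_cat -/(edge_word D (pn_word p n)) IH // andbT; apply: edge_word_nseq.
Qed.

Lemma area_rel_pow_backtrack (e : V * V) n : is_edge D e ->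
  area_rel (letter_pow e n ++ letter_pow (rev_edge e) n) [::] `|n|%N.
Proof.
move=> he; rewrite -[`|n|%N]muln1; apply: area_rel_nseq_cancel => //.
apply: area_rel_relator; case: (0 <= n)%R; first by left; left; exists e.
by right; left; exists (rev_edge e); rewrite is_edge_rev //; case: e he.
Qed.

Lemma area_rel_pow_triangle (e f : V * V) n :
  is_edge D e -> is_edge D f -> e.2 = f.1 -> e.1 != f.2 -> [set e.1; e.2; f.2] \in D ->
  area_rel (letter_pow e n ++ letter_pow f n) (letter_pow (e.1, f.2) n) (4 * `|n|%N ^ 2).
Proof.
move=> he hf hef hne hD3.
have hg' : is_edge D (e.1, f.2) by apply: is_edge_triangle hD3 hne.
have hg : is_edge D (f.2, e.1) by apply: is_edge_rev hg'.
have rel s : [/\ relator_pm D [:: (e, s); (f, s); ((f.2, e.1), s)],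
                 relator_pm D [:: ((f.2, e.1), s); (f, s); (e, s)]
               & relator_pm D [:: ((f.2, e.1), s); ((e.1, f.2), s)]].
  split; case: s.
  - by left; right; exists e, f, (f.2, e.1); split; [by split | split; [by split | left]].
  - by left; right; exists e, f, (f.2, e.1); split; [by split | split; [by split | right]].
  - by right; right; exists e, f, (f.2, e.1); split; [by split | split; [by split | right]].
  - by right; right; exists e, f, (f.2, e.1); split; [by split | split; [by split | left]].
  - by left; left; exists (f.2, e.1).
  - by right; left; exists (e.1, f.2).
case: (rel (0 <= n)%R) => r1 r2 r3.
exact: area_rel_triangle_pow r1 r2 r3.
Qed.

Lemma ep_step_all_edge x y : ep_step D x y -> all (is_edge D) x = all (is_edge D) y.
Proof.
case=> [p1 p2 e he | p1 p2 e f he hf _ hne hD3]; rewrite !all_cat /=.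
  by rewrite he is_edge_rev.
by rewrite he hf (is_edge_triangle hD3 hne).
Qed.

Lemma area_rel_pn_word_ep_step x y n : ep_step D x y -> all (is_edge D) x ->
  area_rel (pn_word x n) (pn_word y n) (4 * `|n|%N ^ 2).
Proof.
case=> [p1 p2 e he | p1 p2 e f he hf hef hne hD3];
  rewrite all_cat !pn_word_cat !pn_word_cons [letter_pow e n ++ _]catA => /andP [hp1 _];
  apply: area_rel_catl; rewrite ?edge_word_pn_word //.
  apply: area_relW (area_rel_catr _ (area_rel_pow_backtrack n he)).
  by rewrite expnS expn1; nia.
by apply: area_rel_catr; apply: area_rel_pow_triangle.
Qed.

Lemma area_rel_pn_word_ep_homotopic x y : ep_homotopic D x y ->
  all (is_edge D) x = all (is_edge D) y /\
  exists c, forall n, all (is_edge D) x -> area_rel (pn_word x n) (pn_word y n) (c * `|n|%N ^ 2).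
Proof.
elim=> {x y} [x y st | x | x y _ [E [c IH]] | x y z _ [E1 [c1 IH1]] _ [E2 [c2 IH2]]].
- split; first exact: ep_step_all_edge st.
  by exists 4 => n; apply: area_rel_pn_word_ep_step.
- by split=> //; exists 0 => n _; apply: area_rel_refl.
- by split=> //; exists c => n hy; apply: area_rel_sym; apply: IH; rewrite E.
- split; first by rewrite E1.
  exists (c1 + c2) => n hx; rewrite mulnDl.
  by apply: area_rel_trans (IH1 _ hx) (IH2 _ _); rewrite -E1.
Qed.

End EdgePathHomotopy.

Lemma uniform_bound (A : eqType) (s : seq A) (P : A -> nat -> Prop) :
  (forall a c c', c <= c' -> P a c -> P a c') ->
  (forall a, a \in s -> exists c, P a c) -> exists c, forall a, a \in s -> P a c.
Proof.
move=> mono; elim: s => [|a s IH] hs; first by exists 0.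
have [c0 h0] := hs a (mem_head _ _).
have [|c1 h1] := IH; first by move=> b hb; apply: hs; rewrite inE hb orbT.
exists (c0 + c1) => b; rewrite inE => /orP [/eqP -> | hb].
  exact: mono (leq_addr _ _) h0.
exact: mono (leq_addl _ _) (h1 _ hb).
Qed.

Definition seqs_upto (T : finType) (M : nat) : seq (seq T) :=
  flatten [seq [seq tval t | t <- enum {: k.-tuple T}] | k <- iota 0 M.+1].

Lemma mem_seqs_upto (T : finType) M (s : seq T) : size s <= M -> s \in seqs_upto T M.
Proof.
move=> hs; apply/flattenP; exists [seq tval t | t <- enum {: (size s).-tuple T}].
  by apply/mapP; exists (size s); rewrite // mem_iota /= add0n ltnS.
by apply/mapP; exists (in_tuple s); rewrite ?mem_enum.
Qed.

Lemma cpath_from_cat (V : finType) (u v w : V) p p' :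
  cpath_from u p v -> cpath_from v p' w -> cpath_from u (p ++ p') w.
Proof. by elim: p u => [|e p IH] u /=; [move/eqP-> | case/andP=> -> /IH]. Qed.

Lemma tree_geodesic_size_bounded (V : finType) (T : {set {set V}}) :
  (forall u v : V, exists p, all (in_tree T) p && cpath_from u p v) ->
  exists N, forall u v p, tree_geodesic T u v p -> size p <= N.
Proof.
move=> hT.
have [N hN] : exists N, forall uv : V * V, uv \in enum {: V * V} ->
    exists2 p, all (in_tree T) p && cpath_from uv.1 p uv.2 & size p <= N.
  apply: uniform_bound => [uv c c' le [p hp hs] | [u v] _].
    by exists p; rewrite // (leq_trans hs le).
  by have [p hp] := hT u v; exists (size p), p.
exists N => u v p [_ [_ geo]].
have [|p' /andP [t' c'] hs] := hN (u, v); first by rewrite mem_enum.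
exact: leq_trans (geo _ t' c') hs.
Qed.

(* Finitely many loops have length at most M, so the constants given by
   [area_rel_pn_word_ep_homotopic] have a common bound. *)
Lemma area_pn_word_loop_bounded (V : finType) (D : {set {set V}}) M :
  simplicial_complex D -> simply_connected D ->
  exists K, forall u x, size x <= M -> all (is_edge D) x -> cpath_from u x u ->
    forall n, area_le D (pn_word x n) (K * `|n|%N ^ 2).
Proof.
move=> hD [_ hnull].
have [K hK] : exists K, forall x, x \in seqs_upto (V * V)%type M ->
    ep_homotopic D x [::] -> forall n, all (is_edge D) x ->
      area_rel D (pn_word x n) [::] (K * `|n|%N ^ 2).
  apply: uniform_bound => [x c c' le hc hx n ex | x _].
    by apply: area_relW (hc hx n ex); rewrite leq_mul2r le orbT.
  have [hx | hx] := classic (ep_homotopic D x [::]); last by exists 0.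
  by have [_ [c hc]] := area_rel_pn_word_ep_homotopic hD hx; exists c.
exists K => u x hs ex hloop n; apply: area_le_area_rel.
exact: hK (mem_seqs_upto hs) (hnull u x ex hloop) n ex.
Qed.

Lemma in_tree_is_edge (V : finType) (D T : {set {set V}}) (e : V * V) :
  spanning_tree D T -> in_tree T e -> is_edge D e.
Proof. by case=> hT _; rewrite /in_tree /is_edge => /andP [-> /hT /andP []]. Qed.

Theorem lemma4p7 (V : finType) (D : {set {set V}}) (q : V) (T : {set {set V}}) :
  simplicial_complex D -> flag D -> simply_connected D -> spanning_tree D T ->
  exists K : nat, forall (e : V * V) (n : int), is_edge D e ->
    forall p1 p2 : seq (V * V),
      tree_geodesic T q (iota_e e) p1 -> tree_geodesic T (tau_e e) q p2 ->
      area_le D (pn_word p1 n ++ letter_pow e n ++ pn_word p2 n) (K * `|n|%N ^ 2).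
Proof.
move=> hD _ hsc hT.
have [N hN] := tree_geodesic_size_bounded hT.2.1.
have [K hK] := area_pn_word_loop_bounded (N + N).+1 hD hsc.
exists K => e n he p1 p2 g1 g2; rewrite -pn_word_cons -pn_word_cat.
have tree_edges p : all (in_tree T) p -> all (is_edge D) p.
  by apply: sub_all => f; apply: in_tree_is_edge hT.
apply: (hK q).
- by rewrite size_cat /= addnS ltnS leq_add // (hN _ _ _ g1, hN _ _ _ g2).
- by rewrite all_cat /= he (tree_edges _ g1.1) (tree_edges _ g2.1).
- by apply: cpath_from_cat g1.2.1 _; rewrite /= eqxx g2.2.1.
Qed.
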